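(* Let $H$ be a digraph (possibly with loops) and let $D$ be an $H$-colored transitive digraph. If $k \geq 2$, then $D$ has a $(k,H)$-kernel.
   Context: All digraphs are finite. A digraph $D$ is transitive if for all distinct $u,v\in V(D)$, whenever there is a directed $uv$-path of length $2$, the arc $(u,v)$ belongs to $A(D)$. $D$ has no loops and comes with a map $\rho: A(D)\to V(H)$. For a walk $W=(x_0,\ldots,x_n)$ in $D$, there is an obstruction on $x_i$ if $(\rho(x_{i-1},x_i),\rho(x_i,x_{i+1})) \notin A(H)$; for an open walk this is considered at internal vertices $x_i$, $1\le i\le n-1$, for a closed walk at all $i\in\{0,\ldots,n-1\}$ with indices modulo $n$. $O_H(W)$ is the set of indices with an obstruction; the $H$-length is $l_H(W)=|O_H(W)|+1$ for open $W$ and $|O_H(W)|$ for closed $W$. A $(k,H)$-kernel ($k\ge2$) is a set $S\subseteq V(D)$ such that for every two distinct $u,v\in S$ every directed $uv$-path in $D$ has $H$-length at least $k$, and for every $x\in V(D)\setminus S$ there is a directed path from $x$ to a vertex of $S$ of $H$-length at most $k-1$. *)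

From mathcomp Require Import all_boot.
Set Implicit Arguments. Unset Strict Implicit. Unset Printing Implicit Defensive.

Section HDefs.
Variables (V VH : finType).
(* D = (V, A) with colouring rho : arcs -> V(H); H = (VH, AH). rho is given as a
   total function V -> V -> VH of which only the values on arcs matter. *)
Variables (A : rel V) (AH : rel VH) (rho : V -> V -> VH).

Definition loopless : Prop := forall x : V, ~~ A x x.

Definition transitive_digraph : Prop :=
  forall u v w : V, u != v -> A u w -> A w v -> A u v.

Fixpoint obstructions (a b : V) (s : seq V) : nat :=
  match s with
  | [::] => 0
  | c :: s' => (~~ AH (rho a b) (rho b c)) + obstructions b c s'
  end.

(* H-length of the open walk x :: p (p non-empty): |O_H| + 1 *)
Definition hlength (x : V) (p : seq V) : nat :=
  match p with
  | [::] => 1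
  | b :: s => obstructions x b s + 1
  end.

Definition dpath (x : V) (p : seq V) (y : V) : bool :=
  [&& path A x p, uniq (x :: p) & last x p == y].

Definition is_kH_kernel (k : nat) (S : {set V}) : Prop :=
  (forall u v, u \in S -> v \in S -> u != v ->
     forall p, dpath u p v -> k <= hlength u p) /\
  (forall x, x \notin S ->
     exists y p, [/\ y \in S, dpath x p y & hlength x p <= k - 1]).

Definition has_kH_kernel (k : nat) : Prop := exists S : {set V}, is_kH_kernel k S.
End HDefs.

From mathcomp Require Import all_boot.
Set Implicit Arguments. Unset Strict Implicit. Unset Printing Implicit Defensive.

(* Pick one vertex in every terminal strong component of D, namely the one of
   least rank in a fixed enumeration.  No directed path joins two distinct
   chosen vertices, so the first kernel condition holds for every k.  Every
   vertex reaches a terminal component, and in a transitive digraph reaching a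
   vertex means having an arc to it: an arc is a path of H-length 1 <= k - 1. *)

Section TerminalRepresentatives.
Variables (V : finType) (A : rel V).

Definition terminal (x : V) : bool := [forall y, connect A x y ==> connect A y x].

Definition terminal_reps : {set V} :=
  [set x | terminal x && [forall y, connect A x y ==> (enum_rank x <= enum_rank y)%N]].

Lemma terminal_reps_connect_eq (x y : V) :
  x \in terminal_reps -> y \in terminal_reps -> connect A x y -> x = y.
Proof.
rewrite !inE => /andP[/forallP tx /forallP mx] /andP[_ /forallP my] cxy.
have cyx := implyP (tx y) cxy.
apply: enum_rank_inj; apply: val_inj; apply/eqP.
by rewrite eqn_leq (implyP (mx y) cxy) (implyP (my x) cyx).
Qed.

Lemma connect_terminal (x : V) : exists2 y, connect A x y & terminal y.
Proof.
pose reach z := [set w | connect A z w].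
have [y cxy miny] := arg_minnP (fun z => #|reach z|) (connect0 A x).
exists y => //; apply/forallP=> z; apply/implyP=> cyz.
have sub_zy : reach z \subset reach y.
  by apply/subsetP=> w; rewrite !inE; apply: connect_trans.
have eq_zy : reach z = reach y.
  by apply/eqP; rewrite eqEcard sub_zy miny ?(connect_trans cxy cyz).
have : y \in reach z by rewrite eq_zy inE connect0.
by rewrite inE.
Qed.

Lemma connect_terminal_reps (x : V) : exists2 y, connect A x y & y \in terminal_reps.
Proof.
have [y cxy /forallP ty] := connect_terminal x.
have [z cyz minz] := arg_minnP (fun z => enum_rank z) (connect0 A y).
have czy := implyP (ty z) cyz.
exists z; first exact: connect_trans cxy cyz.
rewrite inE; apply/andP; split.
  apply/forallP=> w; apply/implyP=> czw.
  exact: connect_trans (implyP (ty w) (connect_trans cyz czw)) cyz.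
by apply/forallP=> w; apply/implyP=> czw; apply/minz/(connect_trans cyz czw).
Qed.

End TerminalRepresentatives.

Lemma transitive_connect_arc (V : finType) (A : rel V) :
  transitive_digraph A -> forall x y, connect A x y -> x != y -> A x y.
Proof.
move=> trA x y /connectP[p]; elim: p x => [|w p IHp] x /=; first by move=> _ ->; rewrite eqxx.
case/andP=> Axw pw ly nxy; have [<- //|nwy] := eqVneq w y.
exact: trA nxy Axw (IHp w pw ly nwy).
Qed.

Lemma is_kH_kernel_arc_absorbing (VH : finType) (AH : rel VH) (V : finType)
    (A : rel V) (rho : V -> V -> VH) (k : nat) (S : {set V}) :
  2 <= k ->
  (forall u v, u \in S -> v \in S -> connect A u v -> u = v) ->
  (forall x, x \notin S -> exists2 y, y \in S & A x y) ->
  is_kH_kernel A AH rho k S.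
Proof.
move=> k_ge2 indepS absorbS; split.
  move=> u v uS vS nuv p /and3P[pp _ /eqP lp].
  have cuv : connect A u v by apply/connectP; exists p.
  by move: nuv; rewrite (indepS u v uS vS cuv) eqxx.
move=> x xS; have [y yS Axy] := absorbS x xS.
have nxy : x != y by apply: contraNneq xS => ->.
exists y, [:: y]; split => //; last by rewrite subn_gt0.
by rewrite /dpath /= Axy inE nxy eqxx.
Qed.

Theorem corollary13 (VH : finType) (AH : rel VH) (V : finType) (A : rel V)
  (rho : V -> V -> VH) (k : nat) :
  loopless A -> transitive_digraph A -> 2 <= k ->
  has_kH_kernel A AH rho k.
Proof.
move=> _ trA k_ge2; exists (terminal_reps A).
apply: is_kH_kernel_arc_absorbing => //; first exact: terminal_reps_connect_eq.
move=> x xS; have [y cxy yS] := connect_terminal_reps A x.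
exists y => //; apply: transitive_connect_arc cxy _ => //.
by apply: contraNneq xS => ->.
Qed.
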